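(* Let $\Gamma$ be a countable group and let $\mathcal P\subseteq\mathrm{Sub}(\Gamma)$ be a nonempty $\Gamma$-invariant $G_\delta$ subset (hence Polish for the induced topology). Assume that $\mathcal{HT}(\Gamma)\cap\mathcal P$ is dense in $\mathcal P$ and that the conjugation action of $\Gamma$ on $\mathcal P$ is topologically transitive. Then the action of $\Gamma$ on $\mathcal P$ is highly topologically transitive.
   Context: $\mathrm{Sub}(\Gamma)$ is the set of subgroups of $\Gamma$ with the topology generated by the clopen sets $\{\Lambda:\mathcal I\subseteq\Lambda,\ \mathcal O\cap\Lambda=\emptyset\}$ with $\mathcal I,\mathcal O\subseteq\Gamma$ finite; $\Gamma$ acts on it by conjugation, $\Lambda\cdot\gamma=\gamma^{-1}\Lambda\gamma$. $\mathcal{HT}(\Gamma)$ is the set of infinite index subgroups $\Lambda$ such that the right-multiplication action $\Lambda\backslash\Gamma\curvearrowleft\Gamma$ is highly transitive (for all $d$, all pairwise distinct $x_1,..,x_d$ and pairwise distinct $y_1,..,y_d$ there is $\gamma$ with $x_i\gamma=y_i$). For an action by homeomorphisms on a Hausdorff space $X$: it is topologically transitive if for all nonempty open $U,V$ there is $\gamma$ with $U\gamma\cap V\ne\emptyset$; for $d\ge1$ it is $d$-topologically transitive if the diagonal action on $X^{(d)}=\{(x_1,\dots,x_d)\in X^d: x_i\neq x_j \text{ for } i\neq j\}$ (with the topology induced from $X^d$) is topologically transitive; if $X$ is infinite it is highly topologically transitive if it is $d$-topologically transitive for all $d\ge1$. *)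

From Stdlib Require Import List.
From mathcomp Require Import all_boot.
Set Implicit Arguments.
Unset Strict Implicit.

Section Defs.
Variables (T : Type) (mul : T -> T -> T) (inv : T -> T) (one : T).

Record is_group : Prop := IsGroup {
  mulA : forall x y z, mul x (mul y z) = mul (mul x y) z;
  mul1g : forall x, mul one x = x;
  mulg1 : forall x, mul x one = x;
  mulVg : forall x, mul (inv x) x = one;
  mulgV : forall x, mul x (inv x) = one }.

Definition countable_type : Prop := exists f : T -> nat, forall x y, f x = f y -> x = y.

Definition is_subgroup (L : T -> Prop) : Prop :=
  L one /\ (forall x y, L x -> L y -> L (mul x y)) /\ (forall x, L x -> L (inv x)).

(* conjugation action Lambda . g = g^-1 Lambda g *)
Definition conj_act (L : T -> Prop) (g : T) : T -> Prop :=
  fun x => L (mul (mul g x) (inv g)).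

Definition basic (I O : list T) (L : T -> Prop) : Prop :=
  (forall x, In x I -> L x) /\ (forall x, In x O -> ~ L x).

Definition open_Sub (W : (T -> Prop) -> Prop) : Prop :=
  (forall L, W L -> is_subgroup L) /\
  (forall L, W L -> exists I O, basic I O L /\
      (forall K, is_subgroup K -> basic I O K -> W K)).

Definition relopen (P U : (T -> Prop) -> Prop) : Prop :=
  exists W, open_Sub W /\ (forall L, U L <-> P L /\ W L).

Definition Gdelta (P : (T -> Prop) -> Prop) : Prop :=
  exists W : nat -> (T -> Prop) -> Prop, (forall n, open_Sub (W n)) /\
    (forall L, P L <-> is_subgroup L /\ forall n, W n L).

Definition conj_invariant (P : (T -> Prop) -> Prop) : Prop :=
  forall L g, P L -> P (conj_act L g).

(* HT(Gamma): right cosets L x, L y coincide iff x y^-1 ∈ L *)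
Definition infinite_index (L : T -> Prop) : Prop :=
  ~ exists reps : list T, forall g, exists h, In h reps /\ L (mul g (inv h)).

Definition coset_action_highly_transitive (L : T -> Prop) : Prop :=
  forall (d : nat) (x y : 'I_d -> T),
    (forall i j, i <> j -> ~ L (mul (x i) (inv (x j)))) ->
    (forall i j, i <> j -> ~ L (mul (y i) (inv (y j)))) ->
    exists g, forall i, L (mul (mul (x i) g) (inv (y i))).

Definition HT (L : T -> Prop) : Prop :=
  is_subgroup L /\ infinite_index L /\ coset_action_highly_transitive L.

Definition dense_in (A P : (T -> Prop) -> Prop) : Prop :=
  forall U, relopen P U -> (exists L, U L) -> exists L, U L /\ A L.

Definition top_transitive (X : Type) (opn : (X -> Prop) -> Prop) (act : X -> T -> X) : Prop :=
  forall U V, opn U -> opn V -> (exists x, U x) -> (exists y, V y) ->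
    exists g x, U x /\ V (act x g).

(* X^(d) for X = P, with topology induced from the product topology *)
Definition distinct_tuple (P : (T -> Prop) -> Prop) (d : nat) (x : 'I_d -> (T -> Prop)) : Prop :=
  (forall i, P (x i)) /\ (forall i j, i <> j -> x i <> x j).

Definition open_tuple (P : (T -> Prop) -> Prop) (d : nat)
    (W : ('I_d -> (T -> Prop)) -> Prop) : Prop :=
  (forall x, W x -> distinct_tuple P x) /\
  (forall x, W x -> exists U : 'I_d -> (T -> Prop) -> Prop,
      (forall i, relopen P (U i)) /\ (forall i, U i (x i)) /\
      (forall y, distinct_tuple P y -> (forall i, U i (y i)) -> W y)).

Definition diag_act (d : nat) (x : 'I_d -> (T -> Prop)) (g : T) : 'I_d -> (T -> Prop) :=
  fun i => conj_act (x i) g.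

Definition d_top_transitive (P : (T -> Prop) -> Prop) (d : nat) : Prop :=
  top_transitive (@open_tuple P d) (@diag_act d).

Definition infinite_set (P : (T -> Prop) -> Prop) : Prop :=
  ~ exists l : list (T -> Prop), forall L, P L -> In L l.

Definition highly_top_transitive (P : (T -> Prop) -> Prop) : Prop :=
  infinite_set P /\ forall d, 1 <= d -> d_top_transitive P d.

End Defs.

From Stdlib Require Import List Classical Lia FunctionalExtensionality PropExtensionality.
From mathcomp Require Import all_boot.
Set Implicit Arguments. Unset Strict Implicit.

(* Iterating topological transitivity, for nonempty open sets F_0, ..., F_(n-1)
   of P there are a nonempty open set A and elements g_k with L^(g_k) in F_k for
   all L in A and k < n; by density A contains some Λ in HT(Γ).  Nonempty open
   subsets of P^(d) contain products of pairwise disjoint open sets U_1..U_d,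
   resp. V_1..V_d.  Applied to these 2d sets, the conjugates Λ^(g_i) in U_i are
   pairwise distinct, hence so are the cosets Λg_i, and likewise the Λg_(d+i);
   high transitivity of Λ\Γ gives γ with Λg_iγ = Λg_(d+i), i.e.
   (Λ^(g_i))^γ = Λ^(g_(d+i)) in V_i.  P is infinite because an HT subgroup has
   infinite index and is self-normalizing, so it has infinitely many conjugates. *)

Section Group.
Variables (T : Type) (mul : T -> T -> T) (inv : T -> T) (one : T).
Hypothesis HG : is_group mul inv one.

Local Notation subgroup := (is_subgroup mul inv one).
Local Notation conj := (conj_act mul inv).

Lemma invgK a : inv (inv a) = a.
Proof.
case: HG => mA m1 m1r mV _.
by have := f_equal (mul (inv (inv a))) (mV a); rewrite mA mV m1 m1r.
Qed.

Lemma invgM a b : inv (mul a b) = mul (inv b) (inv a).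
Proof.
case: HG => mA m1 m1r mV mVr.
have H : mul (mul a b) (mul (inv b) (inv a)) = one by rewrite -mA (mA b) mVr m1 mVr.
by have := f_equal (mul (inv (mul a b))) H; rewrite mA mV m1 m1r => <-.
Qed.

Lemma conj_actM L g a : conj (conj L g) a = conj L (mul g a).
Proof.
rewrite /conj_act invgM; case: HG => mA _ _ _ _.
by apply: functional_extensionality => x; rewrite !mA.
Qed.

Lemma subgroup_mulV_sym L a b :
  subgroup L -> L (mul a (inv b)) -> L (mul b (inv a)).
Proof. by case=> _ [_ LV] /LV; rewrite invgM invgK. Qed.

Lemma subgroup_conj_mem L h y :
  subgroup L -> L h -> L (mul (mul h y) (inv h)) <-> L y.
Proof.
move=> [_ [LM LV]] Lh; split => [Ly | Ly]; last exact: LM (LM _ _ Lh Ly) (LV _ Lh).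
have := LM _ _ (LM _ _ (LV _ Lh) Ly) Lh.
by case: HG => mA m1 m1r mV _; rewrite !mA mV m1 -mA mV m1r.
Qed.

Lemma conj_act_coset L a b :
  subgroup L -> L (mul a (inv b)) -> conj L a = conj L b.
Proof.
move=> HL Lab; apply: functional_extensionality => x.
apply: propositional_extensionality; rewrite /conj_act.
rewrite -(subgroup_conj_mem (mul (mul b x) (inv b)) HL Lab) invgM invgK.
by case: HG => mA _ m1r mV _; rewrite !mA -(mA a (inv b)) mV m1r -(mA _ (inv b) b) mV m1r.
Qed.

Lemma infinite_index_avoid L reps :
  infinite_index mul inv L -> exists c, forall h, In h reps -> ~ L (mul c (inv h)).
Proof.
move=> Linf; apply: NNPP => Nc; apply: Linf; exists reps => g.
apply: NNPP => Ng; apply: Nc; exists g => h hr Lh; apply: Ng; by exists h.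
Qed.

Lemma HT_two_transitive L a b c e :
  HT mul inv one L -> ~ L (mul a (inv b)) -> ~ L (mul c (inv e)) ->
  exists g, L (mul (mul a g) (inv c)) /\ L (mul (mul b g) (inv e)).
Proof.
move=> [HL [_ Lht]] Lab Lce.
pose x (i : 'I_2) := if val i == 0 then a else b.
pose y (i : 'I_2) := if val i == 0 then c else e.
have distinct u v : ~ L (mul u (inv v)) ->
    forall i j : 'I_2, i <> j ->
    ~ L (mul (if val i == 0 then u else v) (inv (if val j == 0 then u else v))).
  move=> Luv [[|[|i]] ?] [[|[|j]] ?] //= ij; try by case: ij; apply: val_inj.
  by move/(subgroup_mulV_sym HL).
have [g Hg] := Lht 2 x y (distinct _ _ Lab) (distinct _ _ Lce).
by exists g; split; [exact: (Hg ord0) | exact: (Hg (Ordinal (isT : 1 < 2)))].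
Qed.

Lemma HT_self_normalizing L h :
  HT mul inv one L -> (forall y, L (mul (mul h y) (inv h)) <-> L y) -> L h.
Proof.
move=> HTL Nh; apply: NNPP => Lh.
(* Send the cosets (L, Lh) to (L, Lc) for a third coset Lc: then g lies in L,
   so hg lies in Lh as h normalizes L, contradicting hg in Lc. *)
have [HL [Linf _]] := HTL; have [_ [LM LV]] := HL.
have [mA m1 m1r mV _] := HG.
have inv1 : inv one = one by rewrite -[inv one]m1r mV.
have [c Hc] := infinite_index_avoid (one :: h :: nil) Linf.
have Lh' : ~ L (mul one (inv h)) by rewrite m1 => /LV; rewrite invgK.
have Lc' : ~ L (mul one (inv c)) by move=> /(subgroup_mulV_sym HL); apply: Hc; left.
have [g [Lg Lhgc]] := HT_two_transitive HTL Lh' Lc'.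
rewrite m1 inv1 m1r in Lg.
apply: (Hc h); first by right; left.
apply: (subgroup_mulV_sym HL).
have := LM _ _ (LV _ (proj2 (Nh g) Lg)) Lhgc.
by rewrite !invgM invgK !mA -(mA _ (inv h) h) mV m1r -(mA _ (inv g) g) mV m1r.
Qed.

Lemma HT_conj_act_inj L a b :
  HT mul inv one L -> conj L a = conj L b -> L (mul a (inv b)).
Proof.
move=> HTL Eab; apply: (HT_self_normalizing HTL) => y.
have [mA m1 m1r _ mVr] := HG.
pose z := mul (mul (inv b) y) b.
have Ea : mul (mul (mul a (inv b)) y) (inv (mul a (inv b))) = mul (mul a z) (inv a).
  by rewrite invgM invgK !mA.
have Eb : mul (mul b z) (inv b) = y.
  by rewrite !mA mVr m1 -mA mVr m1r.
by rewrite Ea -Eb; move: (f_equal (fun K => K z) Eab); rewrite /conj_act => ->.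
Qed.

Lemma HT_conj_class_infinite (P : (T -> Prop) -> Prop) L :
  conj_invariant mul inv P -> HT mul inv one L -> P L -> infinite_set P.
Proof.
move=> HPinv HTL PL [l Hl].
have conjs n : exists reps, length reps = n /\ NoDup (map (conj L) reps).
  elim: n => [|n [reps [Hlen Hnd]]]; first by exists nil; split => //; constructor.
  have [c Hc] := infinite_index_avoid reps (proj1 (proj2 HTL)).
  exists (c :: reps); split; first by rewrite /= Hlen.
  constructor => // /in_map_iff [h [Ehc hr]].
  exact: Hc hr (HT_conj_act_inj HTL (esym Ehc)).
have [reps [Hlen Hnd]] := conjs (length l).+1.
have Hincl : incl (map (conj L) reps) l by move=> K /in_map_iff [h [<- _]]; exact/Hl/HPinv.
by have := NoDup_incl_length Hnd Hincl; rewrite length_map Hlen; lia.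
Qed.

End Group.

(* Relative openness in P stated intrinsically; it agrees with [relopen] when
   P consists of subgroups. *)
Definition open_in T (P U : (T -> Prop) -> Prop) : Prop :=
  forall L, U L -> P L /\
    exists I O, basic I O L /\ forall K, P K -> basic I O K -> U K.

Lemma basic_cat T (I1 O1 I2 O2 : list T) L :
  basic (I1 ++ I2) (O1 ++ O2) L <-> basic I1 O1 L /\ basic I2 O2 L.
Proof.
split=> [[HI HO] | [[HI1 HO1] [HI2 HO2]]].
  by split; split=> x Hx; [apply: HI | apply: HO | apply: HI | apply: HO];
    apply: in_or_app; auto.
by split=> x Hx; case: (in_app_or _ _ _ Hx); auto.
Qed.

Section OpenIn.
Variables (T : Type) (P : (T -> Prop) -> Prop).

Lemma open_in_self : open_in P P.
Proof. by move=> L PL; split => //; exists nil, nil. Qed.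

Lemma open_in_equiv U V : open_in P U -> (forall L, U L <-> V L) -> open_in P V.
Proof.
move=> HU E L /E /HU [PL [I [O [B HB]]]]; split => //.
by exists I, O; split => // K PK BK; apply/E; exact: HB.
Qed.

Lemma open_inI U V : open_in P U -> open_in P V -> open_in P (fun L => U L /\ V L).
Proof.
move=> HU HV L [UL VL].
have [PL [I1 [O1 [B1 H1]]]] := HU L UL; have [_ [I2 [O2 [B2 H2]]]] := HV L VL.
split => //; exists (I1 ++ I2), (O1 ++ O2); split; first exact/basic_cat.
by move=> K PK /basic_cat [] ? ?; split; auto.
Qed.

Lemma open_in_agree1 s (X : T -> Prop) : open_in P (fun L => P L /\ (L s <-> X s)).
Proof.
move=> L [PL LX]; split => //.
case: (classic (X s)) => Xs; [exists (s :: nil), nil | exists nil, (s :: nil)].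
- split; first by split => // x [<-|//]; apply/LX.
  by move=> K PK [HI _]; split => //; split => // _; apply: HI; left.
- split; first by split => // x [<-|//]; rewrite LX.
  by move=> K PK [_ HO]; split => //; split => // Ks; case: (HO s); first left.
Qed.

Lemma open_in_agree S (X : T -> Prop) :
  open_in P (fun L => P L /\ forall s, In s S -> (L s <-> X s)).
Proof.
elim: S => [|s S IH].
  by apply: (open_in_equiv open_in_self _) => L; split=> [PL | []] //; split.
apply: (open_in_equiv (open_inI (open_in_agree1 (s := s) (X := X)) IH)) => L.
split=> [[[PL Ls] [_ LS]] | [PL LsS]]; first by split=> // t [<-|]; auto.
by split; split => //; [apply: LsS; left | move=> t tS; apply: LsS; right].
Qed.
End OpenIn.

Lemma finite_separating_list (T : Type) (I : finType) (z : I -> T -> Prop) :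
  (forall i j, i <> j -> z i <> z j) ->
  exists S : list T, forall i j, i <> j -> exists t, In t S /\ ~ (z i t <-> z j t).
Proof.
move=> zinj.
have sep_pair (p : I * I) : exists S : list T,
    p.1 <> p.2 -> exists t, In t S /\ ~ (z p.1 t <-> z p.2 t).
  case: (classic (exists t, ~ (z p.1 t <-> z p.2 t))) => [[t zt] | Nt].
    by exists (t :: nil) => _; exists t; split => //; left.
  exists nil => /zinj []; apply: functional_extensionality => t.
  by apply: propositional_extensionality; apply: NNPP => zt; apply: Nt; exists t.
have sep_seq (ps : seq (I * I)) : exists S : list T, forall p, p \in ps ->
    p.1 <> p.2 -> exists t, In t S /\ ~ (z p.1 t <-> z p.2 t).
  elim: ps => [|p ps [S HS]]; first by exists nil.
  have [Sp HSp] := sep_pair p.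
  exists (Sp ++ S) => q; rewrite in_cons => /orP [/eqP -> | qps] /[dup] neq.
    by move/HSp=> [t [tS zt]]; exists t; split => //; apply: in_or_app; left.
  by move/(HS q qps) => [t [tS zt]]; exists t; split => //; apply: in_or_app; right.
have [S HS] := sep_seq (enum {: I * I}).
by exists S => i j ij; apply: (HS (i, j)); rewrite ?mem_enum.
Qed.

Section SubgroupTopology.
Variables (T : Type) (mul : T -> T -> T) (inv : T -> T) (one : T).
Variable P : (T -> Prop) -> Prop.
Hypothesis HPsub : forall L, P L -> is_subgroup mul inv one L.

Lemma relopen_open_in U : relopen mul inv one P U -> open_in P U.
Proof.
move=> [W [[_ Wo] HU]] L /HU [PL WL]; split => //.
have [I [O [B HB]]] := Wo L WL.
by exists I, O; split => // K PK BK; apply/HU; split => //; apply: HB (HPsub PK) BK.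
Qed.

Lemma open_in_relopen U : open_in P U -> relopen mul inv one P U.
Proof.
move=> HU; exists (fun K => is_subgroup mul inv one K /\ exists I O,
  basic I O K /\ forall K', P K' -> basic I O K' -> U K').
split; first split.
- by move=> L [].
- move=> K [SK [I [O [BK HB]]]]; exists I, O; split => // K' SK' BK'.
  by split => //; exists I, O.
- move=> L; split=> [UL | [PL [_ [I [O [BL HB]]]]]]; last exact: HB.
  have [PL [I [O [BL HB]]]] := HU L UL.
  by split => //; split; [exact: HPsub | exists I, O].
Qed.

Lemma open_in_conj U g :
  conj_invariant mul inv P -> open_in P U ->
  open_in P (fun L => P L /\ U (conj_act mul inv L g)).
Proof.
move=> HPinv HU L [PL UL]; split => //.
have [_ [I [O [[BI BO] HB]]]] := HU _ UL.
pose f x := mul (mul g x) (inv g).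
exists (map f I), (map f O); split.
  by split=> y /in_map_iff [x [<- Hx]]; [exact: BI | exact: BO].
move=> K PK [CI CO]; split => //; apply: HB; first exact: HPinv.
by split=> x Hx; [apply: CI | apply: CO]; apply/in_map_iff; exists x.
Qed.

Lemma open_tuple_nbhd d (W : ('I_d -> T -> Prop) -> Prop) x :
  open_tuple mul inv one P W -> W x ->
  exists U : 'I_d -> (T -> Prop) -> Prop,
    [/\ forall i, open_in P (U i), forall i, U i (x i),
        forall i j K, i <> j -> U i K -> U j K -> False
      & forall y, (forall i, U i (y i)) -> W y].
Proof.
move=> [Wd Wo] Wx; have [U [Uo [Ux UW]]] := Wo x Wx; have [xP xinj] := Wd x Wx.
have [S HS] := finite_separating_list xinj.
exists (fun i L => U i L /\ (P L /\ forall s, In s S -> (L s <-> x i s))).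
have disj i j K : i <> j -> (P K /\ forall s, In s S -> (K s <-> x i s)) ->
    (P K /\ forall s, In s S -> (K s <-> x j s)) -> False.
  move=> ij [_ Ki] [_ Kj]; have [t [tS xt]] := HS i j ij.
  by apply: xt; rewrite -(Ki t tS) (Kj t tS).
split.
- by move=> i; apply: open_inI; [exact: relopen_open_in | exact: open_in_agree].
- by move=> i; split; last split.
- by move=> i j K ij [_ Ki] [_ Kj]; apply: disj ij Ki Kj.
- move=> y Hy; apply: UW => [|i]; last exact: (Hy i).1.
  split=> [i | i j ij yij]; first exact: (Hy i).2.1.
  by apply: disj ij (Hy i).2 _; rewrite yij; exact: (Hy j).2.
Qed.
End SubgroupTopology.

Section HighTopTransitivity.
Variables (T : Type) (mul : T -> T -> T) (inv : T -> T) (one : T).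
Hypothesis HG : is_group mul inv one.
Variable P : (T -> Prop) -> Prop.
Hypothesis HPsub : forall L, P L -> is_subgroup mul inv one L.
Hypothesis HPinv : conj_invariant mul inv P.
Hypothesis Htt : top_transitive (relopen mul inv one P) (conj_act mul inv).
Hypothesis Hdense : dense_in mul inv one (HT mul inv one) P.

Local Notation conj := (conj_act mul inv).

Lemma open_in_transitive U V :
  open_in P U -> open_in P V -> (exists L, U L) -> (exists L, V L) ->
  exists g L, U L /\ V (conj L g).
Proof. by move=> /(open_in_relopen HPsub) HU /(open_in_relopen HPsub); apply: Htt. Qed.

Lemma open_in_meets_HT U :
  open_in P U -> (exists L, U L) -> exists L, U L /\ HT mul inv one L.
Proof. by move=> /(open_in_relopen HPsub); apply: Hdense. Qed.

Lemma open_in_conj_into_family (F : nat -> (T -> Prop) -> Prop) n :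
  (forall k, open_in P (F k)) -> (forall k, exists L, F k L) ->
  exists A, [/\ open_in P A, exists L, A L &
    forall L, A L -> exists ga : nat -> T, forall k, k < n -> F k (conj L (ga k))].
Proof.
move=> Fo Fne; elim: n => [|n [A [Ao [L0 AL0] AF]]].
  have [L FL] := Fne 0; have [PL _] := Fo 0 L FL.
  by exists P; split; [exact: open_in_self | exists L | move=> K _; exists (fun=> one)].
have [g [L [AL FL]]] := open_in_transitive Ao (Fo n) (ex_intro _ _ AL0) (Fne n).
exists (fun K => A K /\ (P K /\ F n (conj K g))); split.
- exact: open_inI Ao (open_in_conj (g := g) HPinv (Fo n)).
- by exists L; split => //; split => //; exact: (Ao L AL).1.
- move=> K [AK [_ FK]]; have [ga Hga] := AF K AK.
  exists (fun k => if k == n then g else ga k) => k; rewrite ltnS leq_eqVlt.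
  by case: eqP => [-> | _] //= /Hga.
Qed.

Lemma d_top_transitive_succ d : d_top_transitive mul inv one P d.+1.
Proof.
move=> W1 W2 W1o W2o [x W1x] [y W2y].
have [U [Uo Ux Udisj UW1]] := open_tuple_nbhd HPsub W1o W1x.
have [V [Vo Vy Vdisj VW2]] := open_tuple_nbhd HPsub W2o W2y.
pose F k := if k < d.+1 then U (inord k) else V (inord (k - d.+1)).
have Fo k : open_in P (F k) by rewrite /F; case: ifP.
have Fne k : exists L, F k L.
  by rewrite /F; case: ifP => _; [exists (x (inord k)) | exists (y (inord (k - d.+1)))].
have [A [Ao Ane AF]] := open_in_conj_into_family (d.+1 + d.+1) Fo Fne.
have [La [ALa HTLa]] := open_in_meets_HT Ao Ane.
have [ga Hga] := AF La ALa.
have HLa := HPsub (Ao La ALa).1.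
have HU (i : 'I_d.+1) : U i (conj La (ga i)).
  by have := Hga i (leq_trans (ltn_ord i) (leq_addr _ _)); rewrite /F ltn_ord inord_val.
have HV (i : 'I_d.+1) : V i (conj La (ga (d.+1 + i))).
  have := Hga (d.+1 + i); rewrite ltn_add2l ltn_ord => /(_ isT).
  by rewrite /F ltnNge leq_addr /= addKn inord_val.
have cosets_distinct (D : 'I_d.+1 -> (T -> Prop) -> Prop) (h : 'I_d.+1 -> T) :
    (forall i j K, i <> j -> D i K -> D j K -> False) ->
    (forall i, D i (conj La (h i))) ->
    forall i j, i <> j -> ~ La (mul (h i) (inv (h j))).
  move=> Ddisj Dh i j ij /(conj_act_coset HG HLa) Eij.
  by apply: (Ddisj i j _ ij (Dh i)); rewrite Eij.
have [g Hg] := HTLa.2.2 d.+1 (fun i => ga i) (fun i => ga (d.+1 + i))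
  (cosets_distinct U _ Udisj HU) (cosets_distinct V _ Vdisj HV).
exists g, (fun i => conj La (ga i)); split; first exact: UW1.
apply: VW2 => i; rewrite /diag_act (conj_actM HG).
by rewrite (conj_act_coset HG HLa (Hg i)).
Qed.
End HighTopTransitivity.

Theorem theoremD (T : Type) (mul : T -> T -> T) (inv : T -> T) (one : T)
  (HG : is_group mul inv one) (Hc : countable_type T)
  (P : (T -> Prop) -> Prop)
  (HPsub : forall L, P L -> is_subgroup mul inv one L)
  (HPne : exists L, P L)
  (HPinv : conj_invariant mul inv P)
  (HPG : Gdelta mul inv one P)
  (Hdense : dense_in mul inv one (HT mul inv one) P)
  (Htt : top_transitive (relopen mul inv one P) (conj_act mul inv)) :
  highly_top_transitive mul inv one P.
Proof.
split; last by case=> [//|d] _; exact: d_top_transitive_succ.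
have [L [PL HTL]] := open_in_meets_HT HPsub Hdense (@open_in_self _ P) HPne.
exact: (HT_conj_class_infinite HG HPinv HTL PL).
Qed.
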